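(* Let $p \geq 3$ and let $\mathbf{A}$ be a spectrally unitary $\mathbb{Z}^p$-action on $\mathbb{Z}^3$ with $\mathrm{Fix}(\mathbf{A}) = \{0\}$. Then $\mathrm{Fix}(\mathbf{A}_i) = \{0\}$ for some $i$ with $1 \leq i \leq p$.
   Context: A $\mathbb{Z}^p$-action $\mathbf{A}$ on $\mathbb{Z}^q$ is spectrally unitary if it is a homomorphism from $\mathbb{Z}^p$ to the automorphism group of $\mathbb{Z}^q$ and $1$ is an eigenvalue of $\mathbf{A}(\ell)$ for every $\ell \in \mathbb{Z}^p$. For an action $\mathbf{B}$ of a group $G$ on $\mathbb{Z}^q$, $\mathrm{Fix}(\mathbf{B}) = \{k \in \mathbb{Z}^q : \mathbf{B}(g)k = k \text{ for all } g \in G\}$. For $i = 1,\dots,p$, $G_i = \{(a_1,\dots,a_p) \in \mathbb{Z}^p : a_i = 0\}$ and $\mathbf{A}_i$ denotes the restriction of $\mathbf{A}$ to the subgroup $G_i$; thus $\mathrm{Fix}(\mathbf{A}_i) = \bigcap_{j \neq i} \mathrm{Fix}(\mathbf{A}(e_j))$ where $e_1,\dots,e_p$ is the canonical basis of $\mathbb{Z}^p$. *)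

From HB Require Import structures.
From mathcomp Require Import all_boot all_order all_algebra all_field.
Set Implicit Arguments. Unset Strict Implicit. Unset Printing Implicit Defensive.
Import GRing.Theory Num.Theory.
Local Open Scope ring_scope.

(* Z^p is modelled as row vectors 'rV[int]_p, Z^q as column vectors
   'cV[int]_q; automorphisms of Z^q are invertible integer matrices
   (unitmx, i.e. determinant +-1), acting by left multiplication. *)

Definition is_Zaction (p q : nat) (A : 'rV[int]_p -> 'M[int]_q) : Prop :=
  (forall a b : 'rV[int]_p, A (a + b) = A a *m A b) /\
  (forall a : 'rV[int]_p, A a \in unitmx).

Definition spectrally_unitary (p q : nat) (A : 'rV[int]_p -> 'M[int]_q) : Prop :=
  is_Zaction A /\
  forall l : 'rV[int]_p,
    eigenvalue (map_mx (fun z : int => (z%:~R : algC)) (A l)) 1.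

Definition in_Fix (p q : nat) (G : pred 'rV[int]_p) (A : 'rV[int]_p -> 'M[int]_q)
  (k : 'cV[int]_q) : Prop :=
  forall g : 'rV[int]_p, G g -> A g *m k = k.

Definition Fix_trivial (p q : nat) (G : pred 'rV[int]_p) (A : 'rV[int]_p -> 'M[int]_q) : Prop :=
  forall k : 'cV[int]_q, in_Fix G A k -> k = 0.

Definition G_sub (p : nat) (i : 'I_p) : pred 'rV[int]_p :=
  fun a => a ord0 i == 0.

From HB Require Import structures.
From mathcomp Require Import all_boot all_order all_algebra all_field.
From Stdlib Require Import Classical.
Set Implicit Arguments. Unset Strict Implicit. Unset Printing Implicit Defensive.
Import GRing.Theory Num.Theory.
Local Open Scope ring_scope.

(* Suppose every Fix(A_i) is nonzero; only q <= p directions are needed.  Pick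
   nonzero w_c in Fix(A_c) and set u_c = (A(e_c) - 1) w_c.  Since the action is
   commutative, u_c again lies in Fix(A_c); as Fix(A) = 0, A(e_c) - 1 kills neither
   w_c nor u_c, while A(e_c') - 1 kills u_c for c' <> c.  Hence the u_c form a
   nonsingular matrix.  For s = e_1 + ... + e_q we get (A(s) - 1) w_c = u_c, so
   det (A(s) - 1) <> 0 and 1 is not an eigenvalue of A(s). *)

Lemma mulmx_col_sum (R : comPzRingType) m n (U : 'M[R]_(m, n)) (x : 'cV[R]_n) :
  U *m x = \sum_j x j 0 *: col j U.
Proof.
apply/colP => r; rewrite !mxE summxE; apply: eq_bigr => j _.
by rewrite !mxE mulrC.
Qed.

Lemma det_neq0_separated_cols (R : idomainType) n (U : 'M[R]_n)
    (N : 'I_n -> 'M[R]_n) :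
  (forall i j, j != i -> N i *m col j U = 0) ->
  (forall i, N i *m col i U != 0) ->
  \det U != 0.
Proof.
move=> N_other N_self; rewrite -det_tr; apply/det0P => -[v v_neq0 vU0].
have Uv0 : U *m v^T = 0 by rewrite -[U]trmxK -trmx_mul vU0 trmx0.
rewrite mulmx_col_sum in Uv0.
move/eqP: v_neq0; apply; apply/rowP => i; rewrite mxE.
have := congr1 (mulmx (N i)) Uv0.
rewrite mulmx0 mulmx_sumr (bigD1 i) //= big1 ?addr0; last first.
  by move=> j ji; rewrite -scalemxAr N_other ?scaler0.
rewrite -scalemxAr => /eqP; rewrite scalemx_eq0 (negbTE (N_self i)) orbF.
by rewrite mxE => /eqP.
Qed.

Definition matrix_of_cols (R : Type) m n (v : 'I_n -> 'cV[R]_m) : 'M[R]_(m, n) :=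
  \matrix_(r, j) v j r 0.

Lemma col_matrix_of_cols (R : Type) m n (v : 'I_n -> 'cV[R]_m) j :
  col j (matrix_of_cols v) = v j.
Proof. by apply/colP => r; rewrite !mxE. Qed.

Lemma mulmx_matrix_of_cols (R : pzSemiRingType) m n k (M : 'M[R]_(k, m))
    (v : 'I_n -> 'cV[R]_m) :
  M *m matrix_of_cols v = matrix_of_cols (fun j => M *m v j).
Proof. by apply/matrixP => r j; rewrite !mxE; apply: eq_bigr => i _; rewrite mxE. Qed.

Lemma eq_matrix_of_cols (R : Type) m n (v v' : 'I_n -> 'cV[R]_m) :
  v =1 v' -> matrix_of_cols v = matrix_of_cols v'.
Proof. by move=> vv'; apply/matrixP => r j; rewrite !mxE vv'. Qed.

Lemma int_eigenvalue1_det (F : numFieldType) n (M : 'M[int]_n) :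
  eigenvalue (map_mx (fun z : int => (z%:~R : F)) M) 1 -> \det (M - 1%:M) = 0.
Proof.
case/eigenvalueP => v vM v_neq0; apply/eqP; rewrite -(intr_eq0 F) -det_map_mx.
apply/det0P; exists v => //.
by rewrite map_mxB map_mx1 mulmxBr vM mulmx1 scale1r subrr.
Qed.

Section ZAction.
Variables (p q : nat) (A : 'rV[int]_p -> 'M[int]_q).
Hypothesis AD : forall a b, A (a + b) = A a *m A b.
Hypothesis A_unit : forall a, A a \in unitmx.

Lemma Zaction0 : A 0 = 1%:M.
Proof. by have := mulKmx (A_unit 0) (A 0); rewrite -AD addr0 mulVmx. Qed.

Lemma ZactionC a b : A a *m A b = A b *m A a.
Proof. by rewrite -!AD addrC. Qed.

Section Stabilizer.
Variable k : 'cV[int]_q.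

Lemma fixD a b : A a *m k = k -> A b *m k = k -> A (a + b) *m k = k.
Proof. by move=> ak bk; rewrite AD -mulmxA bk ak. Qed.

Lemma fixN a : A a *m k = k -> A (- a) *m k = k.
Proof. by move=> ak; rewrite -{1}ak mulmxA -AD addNr Zaction0 mul1mx. Qed.

Lemma fixMn a n : A a *m k = k -> A (a *+ n) *m k = k.
Proof.
move=> ak; elim: n => [|n IHn]; first by rewrite mulr0n Zaction0 mul1mx.
by rewrite mulrS fixD.
Qed.

Lemma fixZ a (z : int) : A a *m k = k -> A (z *: a) *m k = k.
Proof.
move=> ak; rewrite -[z]intz scaler_int; case: z => n; first exact: fixMn.
by rewrite NegzE mulrNz; apply/fixN/fixMn.
Qed.

Lemma in_Fix_G_sub_predT i :
  in_Fix (G_sub i) A k -> A 'e_i *m k = k -> in_Fix predT A k.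
Proof.
move=> Gik eik g _; rewrite -(subrK (g 0 i *: 'e_i) g).
apply: fixD; last exact: fixZ.
by apply: Gik; rewrite /G_sub !mxE !eqxx mulr1 subrr.
Qed.

End Stabilizer.

Hypothesis Fix0 : Fix_trivial predT A.

Lemma G_sub_displacement_eq0 i k :
  in_Fix (G_sub i) A k -> (A 'e_i - 1%:M) *m k = 0 -> k = 0.
Proof.
move=> Gik /eqP; rewrite mulmxBl mul1mx subr_eq0 => /eqP eik.
exact/Fix0/(in_Fix_G_sub_predT Gik).
Qed.

Section Frame.
Variables (idx : 'I_q -> 'I_p) (w : 'I_q -> 'cV[int]_q).
Hypothesis idx_inj : injective idx.
Hypothesis w_Fix : forall c, in_Fix (G_sub (idx c)) A (w c).
Hypothesis w_neq0 : forall c, w c != 0.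

Let e c : 'rV[int]_p := 'e_(idx c).
Let D c := A (e c) - 1%:M.
Let u c := D c *m w c.

Lemma e_G_sub c c' : c' != c -> G_sub (idx c) (e c').
Proof.
by move=> c'c; rewrite /G_sub mxE eqxx (inj_eq idx_inj) (eq_sym c) (negbTE c'c).
Qed.

Lemma D_in_Fix c k :
  in_Fix (G_sub (idx c)) A k -> in_Fix (G_sub (idx c)) A (D c *m k).
Proof.
by move=> ck g Gg; rewrite /D !mulmxBl mul1mx mulmxBr mulmxA ZactionC -mulmxA ck.
Qed.

Lemma D_u_neq0 c : D c *m u c != 0.
Proof.
apply: contra (w_neq0 c) => /eqP/(G_sub_displacement_eq0 (D_in_Fix (@w_Fix c))) u0.
exact/eqP/(G_sub_displacement_eq0 (@w_Fix c)).
Qed.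

Lemma D_u_eq0 c c' : c' != c -> D c *m u c' = 0.
Proof.
move=> c'c; rewrite /D mulmxBl mul1mx (D_in_Fix (@w_Fix c')) ?subrr //.
by rewrite e_G_sub // eq_sym.
Qed.

Lemma D_sum_w c : (A (\sum_c' e c') - 1%:M) *m w c = u c.
Proof.
rewrite /u /D (bigD1 c) //= AD !mulmxBl -mulmxA w_Fix //.
apply: (big_ind (G_sub (idx c))) => [|a b|c' c'c]; last exact: e_G_sub.
- by rewrite /G_sub mxE.
- by rewrite /G_sub mxE => /eqP -> /eqP ->; rewrite addr0.
Qed.

Lemma det_D_sum_neq0 : \det (A (\sum_c e c) - 1%:M) != 0.
Proof.
have detU : \det (matrix_of_cols u) != 0.
  apply: (@det_neq0_separated_cols _ _ _ D) => [c c'|c]; rewrite col_matrix_of_cols.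
    exact: D_u_eq0.
  exact: D_u_neq0.
apply: contraNneq detU => det0.
by rewrite -(eq_matrix_of_cols D_sum_w) -mulmx_matrix_of_cols det_mulmx det0 mul0r.
Qed.

End Frame.
End ZAction.

Lemma not_Fix_trivial p q (G : pred 'rV[int]_p) (A : 'rV[int]_p -> 'M[int]_q) :
  ~ Fix_trivial G A -> exists2 k, in_Fix G A k & k != 0.
Proof.
move=> notFix0; apply: NNPP => noFix; apply: notFix0 => k Gk.
have [//|k_neq0] := eqVneq k 0.
by case: noFix; exists k.
Qed.

Theorem spectrally_unitary_Fix_G_sub p q (A : 'rV[int]_p -> 'M[int]_q) :
  (q <= p)%N ->
  spectrally_unitary A ->
  Fix_trivial predT A ->
  exists i : 'I_p, Fix_trivial (G_sub i) A.
Proof.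
move=> qp [[AD A_unit] eig1] Fix0; apply: NNPP => noFix0.
pose idx (c : 'I_q) : 'I_p := widen_ord qp c.
have idx_inj : injective idx by move=> c c' /(congr1 val) /= /val_inj.
have w_ex c : exists2 w, in_Fix (G_sub (idx c)) A w & w != 0.
  exact: not_Fix_trivial (fun Fix0c => noFix0 (ex_intro _ (idx c) Fix0c)).
have [w w_Fix w_neq0] := fin_all_exists2 w_ex.
have := det_D_sum_neq0 AD A_unit Fix0 idx_inj w_Fix w_neq0.
by rewrite (int_eigenvalue1_det (eig1 _)) eqxx.
Qed.

Theorem lemma2p7 (p : nat) (A : 'rV[int]_p -> 'M[int]_3) :
  (3 <= p)%N ->
  spectrally_unitary A ->
  Fix_trivial predT A ->
  exists i : 'I_p, Fix_trivial (G_sub i) A.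
Proof. exact: spectrally_unitary_Fix_G_sub. Qed.
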